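(* Consider the quantized estimation system described in the context, with parameter set $\Theta\subset\mathbb{R}^{D_\theta}$. Assume (i) the interior of $\Theta$ in $\mathbb{R}^{D_\theta}$ is nonempty, and (ii) for every $j\in\{1,\dots,N\}$ and every $\mathbf{s}\in\mathcal{S}_j$, the function $\theta\mapsto q_j^{(\mathbf{s})}(\theta)$ is twice differentiable with respect to $\theta$ for all $\theta\in\Theta$. Then for any $\theta\in\Theta$, any quantization regions $\{I_{jl}^{(r)}\}$ and any statistical models $\{(\mathscr{X}_j,\mathscr{F}_j,\mathscr{P}_j^{\theta})\}$, if $$D_\theta>\lambda(N,\{R_{jl}\}):=\sum_{j=1}^N\prod_{l=1}^{L_j}R_{jl}-N,$$ then the Fisher information matrix $\mathbf{J}(\theta)$ is singular.
   Context: Setting: $\Theta\subset\mathbb{R}^{D_\theta}$ is a parameter set. There are $N\ge 1$ sensors. Sensor $j$ observes a random vector $\mathbf{x}_j$ with statistical model $(\mathscr{X}_j,\mathscr{F}_j,\mathscr{P}_j^{\theta})$, i.e. its law is the probability measure $\mathscr{P}_j^\theta$ on the measurable space $(\mathscr{X}_j,\mathscr{F}_j)$, indexed by $\theta\in\Theta$; $\mathbf{x}_1,\dots,\mathbf{x}_N$ are independent. Each $\mathbf{x}_j$ is partitioned into $L_j\ge1$ disjoint subvectors, $\mathbf{x}_j=[\mathbf{x}_{j1}^T,\dots,\mathbf{x}_{jL_j}^T]^T$. For each $j,l$, $\gamma_{jl}$ is an $R_{jl}$-level vector quantizer ($R_{jl}\ge1$ an integer): there are disjoint quantization regions $I_{jl}^{(1)},\dots,I_{jl}^{(R_{jl})}$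 covering the domain of $\gamma_{jl}$, and $\gamma_{jl}(\mathbf{x}_{jl})=\sum_{r=1}^{R_{jl}} r\,\mathbb{1}\{\mathbf{x}_{jl}\in I_{jl}^{(r)}\}$. The superquantizer $\Gamma_j(\mathbf{x}_j)=[\gamma_{j1}(\mathbf{x}_{j1}),\dots,\gamma_{jL_j}(\mathbf{x}_{jL_j})]^T$ is a measurable map from $(\mathscr{X}_j,\mathscr{F}_j)$ to $\mathbb{R}^{L_j}$ with its Borel algebra. The fusion center receives $\mathbf{u}=[\mathbf{u}_1^T,\dots,\mathbf{u}_N^T]^T$ with $\mathbf{u}_j=\Gamma_j(\mathbf{x}_j)$. Let $\mathcal{S}_j$ be the set of all possible outcomes of $\Gamma_j$, so $|\mathcal{S}_j|=\prod_{l=1}^{L_j}R_{jl}$, and for $\mathbf{s}\in\mathcal{S}_j$ let $q_j^{(\mathbf{s})}(\theta)=\mathscr{P}_j^\theta(\Gamma_j(\mathbf{x}_j)=\mathbf{s})$. The Fisher information matrix for estimating $\theta$ from $\mathbf{u}$ is the $D_\theta\times D_\theta$ matrix $$\mathbf{J}(\theta)=\sum_{j=1}^N\sum_{\mathbf{s}\in\mathcal{S}_j}\frac{1}{q_j^{(\mathbf{s})}(\theta)}\frac{\partial q_j^{(\mathbf{s})}(\theta)}{\partial\theta}\left[\frac{\partial q_j^{(\mathbf{s})}(\theta)}{\partial\theta}\right]^T,$$ where summands with $q_j^{(\mathbf{s})}(\theta)=0$ are omitted. The quantity $\lambda(N,\{R_{jl}\})$ is called the inestimable dimension for quantized data (IDQD).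 *)

From HB Require Import structures.
From mathcomp Require Import all_boot all_order all_algebra.
From mathcomp Require Import all_classical all_reals all_analysis.
Set Implicit Arguments. Unset Strict Implicit. Unset Printing Implicit Defensive.
Import Order.TTheory GRing.Theory Num.Theory.
Import numFieldNormedType.Exports.
Local Open Scope classical_set_scope.
Local Open Scope ring_scope.

(* Set of all possible outcomes of a superquantizer with L subvectors,
   the l-th quantized with Rl l levels (levels indexed 0..Rl l - 1,
   i.e. the paper's level r corresponds to the ordinal r-1). *)
Definition outcome (L : nat) (Rl : 'I_L -> nat) : finType :=
  {dffun forall l : 'I_L, 'I_(Rl l)}.

(* Superquantizer Gamma(x) = [gamma_1(x_1); ...; gamma_L(x_L)], where
   x_l = sub l x is the l-th subvector and gamma_l is an (Rl l)-level quantizer,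
   its quantization regions being the level sets gamma_l^{-1}(r). *)
Definition superquantizer (T : Type) (L : nat) (Rl : 'I_L -> nat)
  (Y : 'I_L -> Type) (sub : forall l, T -> Y l)
  (gam : forall l, Y l -> 'I_(Rl l)) (x : T) : outcome Rl :=
  [ffun l : 'I_L => gam l (sub l x)].

Definition qprob (R : realType) (D : nat) (d : measure_display)
  (T : measurableType d) (P : 'rV[R]_D -> probability T R)
  (L : nat) (Rl : 'I_L -> nat) (Gam : T -> outcome Rl)
  (s : outcome Rl) (theta : 'rV[R]_D) : R :=
  fine (P theta (Gam @^-1` [set s])).

Definition grad (R : realType) (D : nat) (f : 'rV[R]_D -> R) (theta : 'rV[R]_D)
  : 'cV[R]_D :=
  \col_(i < D) derive f theta (delta_mx 0 i).

Definition fisher (R : realType) (D N : nat) (L : 'I_N -> nat)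
  (Rl : forall j, 'I_(L j) -> nat)
  (q : forall j, outcome (Rl j) -> 'rV[R]_D -> R) (theta : 'rV[R]_D)
  : 'M[R]_D :=
  \sum_(j < N) \sum_(s : outcome (Rl j) | q j s theta != 0)
     (q j s theta)^-1 *: (grad (q j s) theta *m (grad (q j s) theta)^T).

From HB Require Import structures.
From mathcomp Require Import all_boot all_order all_algebra.
From mathcomp Require Import all_classical all_reals all_analysis.
Import Order.TTheory GRing.Theory Num.Theory.
Import numFieldNormedType.Exports.
Set Implicit Arguments. Unset Strict Implicit. Unset Printing Implicit Defensive.
Local Open Scope classical_set_scope.
Local Open Scope ring_scope.

(* For each sensor the probabilities q^(s)(theta) of the quantizer outcomes
   sum to 1 for every theta, so their gradients sum to 0; moreover the
   gradient of a q^(s) vanishing at theta is 0, since theta is then a minimum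
   of a nonnegative function.  Hence the gradients occurring in the Fisher
   information of sensor j satisfy a nontrivial linear relation, its rank is
   at most |S_j| - 1, and the rank of J(theta) is at most
   sum_j (|S_j| - 1) = lambda < D. *)

Lemma derive_ge0_at_min (R : realType) n (f : 'rV[R]_n -> R) x v :
  derivable f x v -> (forall y, f x <= f y) -> 0 <= 'D_v f x.
Proof.
move=> df fmin; rewrite /derive.
rewrite (cvg_at_rightE (fun h : R => h^-1 *: ((f \o shift x) (h *: v) - f x))) //.
apply: limr_ge.
  apply/cvg_ex; eexists; apply: cvg_trans df; apply: cvg_app.
  by move=> A [e e0 Ae]; exists e => // y ye y0; apply: Ae => //; exact: lt0r_neq0.
near=> h; apply: mulr_ge0; last by rewrite subr_ge0 fmin.
by rewrite invr_ge0; apply: ltW; near: h; exists 1 => /=.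
Unshelve. all: by end_near. Qed.

Lemma derive_eq0_at_min (R : realType) n (f : 'rV[R]_n -> R) x v :
  differentiable f x -> (forall y, f x <= f y) -> 'D_v f x = 0.
Proof.
move=> df fmin; have Dge0 w : 0 <= 'D_w f x.
  by apply: derive_ge0_at_min fmin; exact: diff_derivable.
apply/eqP; rewrite eq_le Dge0 andbT -oppr_ge0.
by rewrite !deriveE // -linearN -deriveE.
Qed.

Lemma is_derive_sum_seq (R : numFieldType) (V W : normedModType R) (I : Type)
  (r : seq I) (h : I -> V -> W) (x v : V) (dh : I -> W) :
  (forall i, is_derive x v (h i) (dh i)) ->
  is_derive x v (\sum_(i <- r) h i) (\sum_(i <- r) dh i).
Proof.
move=> hdh; elim/big_ind2 : _ => // *; first exact: is_derive_cst.
exact: is_deriveD.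
Qed.

Lemma mxrank_sumsmx_le (F : fieldType) (I : Type) (r : seq I) (P : pred I) n
  (A : I -> 'M[F]_n) :
  (\rank (\sum_(i <- r | P i) A i)%MS <= \sum_(i <- r | P i) \rank (A i))%N.
Proof.
elim/big_rec2: _ => [|i k B _ IH]; first by rewrite mxrank0.
by apply: leq_trans (mxrank_adds_leqif _ _).1 _; rewrite leq_add2l.
Qed.

Lemma mxrank_sum_le (F : fieldType) (I : finType) (P : pred I) m n
  (A : I -> 'M[F]_(m, n)) :
  (\rank (\sum_(i | P i) A i)%R <= \sum_(i | P i) \rank (A i))%N.
Proof.
have sub_sums : ((\sum_(i | P i) A i)%R <= \sum_(i | P i) <<A i>>)%MS.
  by apply: summx_sub_sums => i _; rewrite genmxE.
apply: leq_trans (mxrankS sub_sums) _.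
apply: leq_trans (mxrank_sumsmx_le _ _ _) _.
by apply: leq_sum => i _; rewrite mxrank_gen.
Qed.

Lemma det_eq0_mxrank_lt (F : fieldType) n (A : 'M[F]_n) :
  (\rank A < n)%N -> \det A = 0.
Proof.
move=> rankA; apply/eqP; apply: contraTT rankA => detA.
by rewrite -leqNgt (mxrank_unit _) // unitmxE unitfE.
Qed.

Lemma mxrank_sumsmx_dep_le (F : fieldType) (S : finType) (P : pred S) n
  (v : S -> 'rV[F]_n) (s0 : S) :
  P s0 -> \sum_(s | P s) v s = 0 ->
  (\rank (\sum_(s | P s) <<v s>>)%MS <= #|P|.-1)%N.
Proof.
move=> Ps0 v0; set V := (\sum_(s in [predD1 P & s0]) <<v s>>)%MS.
have v_sub s : P s -> (v s <= V)%MS.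
  case: (eqVneq s s0) => [-> _ | s_neq Ps]; last first.
    by apply: (sumsmx_sup s); rewrite ?inE ?s_neq // genmxE.
  have -> : v s0 = - \sum_(s in [predD1 P & s0]) v s.
    apply/eqP; rewrite -addr_eq0; apply/eqP.
    rewrite -[RHS]v0 (bigD1 s0 Ps0) /=.
    by congr (_ + _); apply: eq_bigl => t; rewrite !inE andbC.
  by rewrite (eqmx_opp _); apply: summx_sub_sums => t _; rewrite genmxE.
have sumV : (\sum_(s | P s) <<v s>> <= V)%MS.
  by apply/sumsmx_subP => s /v_sub; rewrite genmxE.
apply: leq_trans (mxrankS sumV) _.
apply: leq_trans (mxrank_sumsmx_le _ _ _) _.
rewrite (cardD1 s0) [s0 \in P]Ps0 -sum1_card; apply: leq_sum => s _.
by rewrite mxrank_gen rank_leq_row.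
Qed.

Lemma mxrank_sum_outer_le (F : fieldType) (S : finType) (P : pred S) n
  (c : S -> F) (g : S -> 'cV[F]_n) (s0 : S) :
  P s0 -> \sum_(s | P s) g s = 0 ->
  (\rank (\sum_(s | P s) c s *: (g s *m (g s)^T))%R <= #|P|.-1)%N.
Proof.
move=> Ps0 g0.
have sub_sums : ((\sum_(s | P s) c s *: (g s *m (g s)^T))%R
                 <= \sum_(s | P s) <<(g s)^T>>)%MS.
  by apply: summx_sub_sums => s _; rewrite genmxE scalemx_sub // submxMl.
apply: leq_trans (mxrankS sub_sums) (mxrank_sumsmx_dep_le Ps0 _).
by rewrite -linear_sum /= g0 trmx0.
Qed.

Section FisherRank.
Variables (R : realType) (D : nat) (S : finType) (q : S -> 'rV[R]_D -> R).
Hypotheses (q_ge0 : forall s t, 0 <= q s t) (sum_q : forall t, \sum_s q s t = 1).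
Variable theta : 'rV[R]_D.
Hypothesis q_diff : forall s, differentiable (q s) theta.

Lemma grad_sum_eq0 : \sum_s grad (q s) theta = 0.
Proof.
apply/matrixP => i k; rewrite summxE mxE; under eq_bigr do rewrite mxE.
have qD : is_derive theta (delta_mx 0 i) (\sum_s q s)
                   (\sum_s 'D_(delta_mx 0 i) (q s) theta).
  by apply: is_derive_sum_seq => s; apply/derivableP/diff_derivable.
rewrite -[LHS](@derive_val _ _ _ _ _ _ _ qD).
have -> : \sum_s q s = cst 1 by rewrite fct_sumE; apply/funext => t; exact: sum_q.
exact: derive_cst.
Qed.

Lemma grad_sum_support_eq0 :
  \sum_(s | q s theta != 0) grad (q s) theta = 0.
Proof.
rewrite -[RHS]grad_sum_eq0 [RHS](bigID (fun s => q s theta != 0)) /=.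
rewrite [X in _ = _ + X]big1 ?addr0 // => s /negPn/eqP qs0.
apply/matrixP => i k; rewrite !mxE derive_eq0_at_min // => t.
by rewrite qs0 q_ge0.
Qed.

Lemma exists_q_neq0 : exists s, q s theta != 0.
Proof.
apply/existsP; apply: contraT; rewrite negb_exists => /forallP q0.
by rewrite -(oner_eq0 R) -(sum_q theta) big1 // => s _; exact/eqP/negPn/q0.
Qed.

Lemma mxrank_fisher_le :
  (\rank (\sum_(s | q s theta != 0)
     (q s theta)^-1 *: (grad (q s) theta *m (grad (q s) theta)^T))%R
   <= #|S|.-1)%N.
Proof.
have [s0 qs0] := exists_q_neq0.
have := mxrank_sum_outer_le (fun s => (q s theta)^-1) qs0 grad_sum_support_eq0.
move/leq_trans; apply.
by rewrite -!subn1 leq_sub2r // max_card.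
Qed.

End FisherRank.

Lemma sum_prob_fibers (R : realType) d (T : measurableType d)
  (Pr : probability T R) (S : finType) (G : T -> S) :
  (forall s, measurable (G @^-1` [set s])) ->
  \sum_s fine (Pr (G @^-1` [set s])) = 1.
Proof.
move=> mG; rewrite sum_fine => [|s _]; last exact: fin_num_measure.
have cover : [set: T] = \bigcup_(s in [set: S]) G @^-1` [set s].
  by apply/seteqP; split => x // _; exists (G x).
rewrite -[1]/(fine 1%E) -(probability_setT Pr) cover.
rewrite measure_fin_bigcup //; last first.
- exact: trivIset_preimage1.
- exact: finite_finset.
congr fine; rewrite [RHS](fsbigE (index_enum S)) ?index_enum_uniq //.
- by apply: eq_bigl => s; rewrite in_setT.
- by move=> s _; rewrite mem_index_enum.
Qed.

Lemma qprob_ge0 (R : realType) (D : nat) d (T : measurableType d)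
  (P : 'rV[R]_D -> probability T R) (L : nat) (Rl : 'I_L -> nat)
  (Gam : T -> outcome Rl) s theta : 0 <= qprob P Gam s theta.
Proof. exact/fine_ge0/measure_ge0. Qed.

Lemma card_outcome (L : nat) (Rl : 'I_L -> nat) :
  #|outcome Rl| = (\prod_(l < L) Rl l)%N.
Proof.
rewrite card_dep_ffun foldrE big_image /=.
by apply: eq_bigr => l _; exact: card_ord.
Qed.

Lemma sum_predn (n : nat) (a : 'I_n -> nat) : (forall i, 0 < a i)%N ->
  (\sum_(i < n) (a i).-1 = \sum_(i < n) a i - n)%N.
Proof.
move=> a_gt0; rewrite [X in (_ = X - _)%N](eq_bigr (fun i => (a i).-1 + 1)%N).
  by rewrite big_split /= sum1_card card_ord addnK.
by move=> i _; rewrite addn1 prednK.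
Qed.

Theorem theorem1 (R : realType) (D : nat) (Theta : set 'rV[R]_D)
  (N : nat) (L : 'I_N -> nat) (Rl : forall j, 'I_(L j) -> nat)
  (dX : 'I_N -> measure_display) (X : forall j, measurableType (dX j))
  (P : forall j, 'rV[R]_D -> probability (X j) R)
  (Y : forall j, 'I_(L j) -> Type)
  (sub : forall j (l : 'I_(L j)), X j -> Y j l)
  (gam : forall j (l : 'I_(L j)), Y j l -> 'I_(Rl j l)) :
  (0 < N)%N ->
  (forall j, 0 < L j)%N ->
  (forall j l, 0 < Rl j l)%N ->
  (* the superquantizer Gamma_j is measurable *)
  (forall j (s : outcome (Rl j)),
     measurable (superquantizer (sub j) (gam j) @^-1` [set s])) ->
  (* (i) the interior of Theta is nonempty *)
  interior Theta !=set0 ->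
  (* (ii) theta |-> q_j^(s)(theta) is twice differentiable on Theta *)
  (forall j (s : outcome (Rl j)) theta, Theta theta ->
     differentiable (qprob (P j) (superquantizer (sub j) (gam j)) s) theta /\
     forall i : 'I_D,
       differentiable (fun t => derive
         (qprob (P j) (superquantizer (sub j) (gam j)) s) t (delta_mx 0 i))
         theta) ->
  forall theta, Theta theta ->
  (\sum_(j < N) \prod_(l < L j) Rl j l - N < D)%N ->
  \det (fisher (fun j => qprob (P j) (superquantizer (sub j) (gam j))) theta)
    = 0.
Proof.
(* Only the first-order differentiability in (ii) is needed, and only at theta. *)
move=> _ _ Rl_gt0 mGam _ q_diff theta Theta_theta ltD.
apply: det_eq0_mxrank_lt; apply: leq_ltn_trans (mxrank_sum_le _ _) _.
apply: (@leq_ltn_trans (\sum_(j < N) #|outcome (Rl j)|.-1)).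
  apply: leq_sum => j _; apply: mxrank_fisher_le => [s t|t|s].
  - exact: qprob_ge0.
  - exact: sum_prob_fibers.
  - exact: (q_diff j s theta Theta_theta).1.
rewrite sum_predn => [|j]; last by rewrite card_outcome prodn_gt0.
by under eq_bigr do rewrite card_outcome.
Qed.
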